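(* Given a word $w\in\Sigma^n$ (with $\Sigma=\{1,\dots,\sigma\}$), the next element graph $\mathrm{NEG}(w)$ can be constructed in $O(n\sigma)$ time.
   Context: Words are finite sequences over $\Sigma=\{1,\dots,\sigma\}$ with the usual order, $\Sigma$ being the set of letters of $w$. $P_w[i,x]$ denotes the largest $i'\le i$ with $w[i']=x$. The next element graph $\mathrm{NEG}(w)$ is the directed, edge-labelled graph with vertices $v_1,\dots,v_n$ (vertex $v_i$ representing position $i$) whose edges are pairs $(v_i,v_j)$ with $i<j$ carrying a label in $\{\uparrow,\rightarrow,\downarrow\}$ as follows: label $\uparrow$ if $w[i]<w[j]$ and for all $j'\in[i+1,j-1]$, $w[i]>w[j']$ or $w[j']>w[j]$; label $\rightarrow$ if $w[i]=w[j]$ and $i=P_w[j-1,w[j]]$; label $\downarrow$ if $w[i]>w[j]$ and for all $j'\in[i+1,j-1]$, $w[i]<w[j']$ or $w[j']<w[j]$. Model: word RAM with logarithmic word size. *)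

From mathcomp Require Import all_boot.
Set Implicit Arguments. Unset Strict Implicit. Unset Printing Implicit Defensive.

(* A word is a seq nat; positions are 1-indexed: w[i] = nth 0 w (i-1). *)
Definition wat (w : seq nat) (i : nat) : nat := nth 0 w i.-1.

(* P_w[i,x] = largest i' <= i (i' >= 1) with w[i'] = x (0 if none). *)
Definition Pw (w : seq nat) (i x : nat) : nat :=
  \max_(i' < i.+1 | (0 < (i' : nat)) && (wat w i' == x)) (i' : nat).

Inductive label := Up | Right | Down.

Definition neg_edge (w : seq nat) (i j : nat) (l : label) : Prop :=
  [/\ 1 <= i, i < j, j <= size w &
   match l with
   | Up => wat w i < wat w j /\
           forall j', i < j' < j -> (wat w j' < wat w i) \/ (wat w j < wat w j')
   | Right => wat w i = wat w j /\ i = Pw w j.-1 (wat w j)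
   | Down => wat w j < wat w i /\
           forall j', i < j' < j -> (wat w i < wat w j') \/ (wat w j' < wat w j)
   end].

Definition label_code (l : label) : nat :=
  match l with Up => 0 | Right => 1 | Down => 2 end.

(* Registers r_0, r_1, ... and memory cells hold natural numbers bounded by a
   word bound B (word size log B); every instruction costs one step. *)
Inductive instr :=
| IConst (r v : nat)
| IAdd (r a b : nat)
| ISub (r a b : nat)          (* r := a - b (truncated) *)
| IMul (r a b : nat)
| IDiv (r a b : nat)
| IMod (r a b : nat)
| ILoad (r a : nat)
| IStore (a b : nat)
| IJz (a l : nat)
| IJlt (a b l : nat)
| IHalt.

Record config := Cfg { pc : nat; regs : nat -> nat; mem : nat -> nat }.

Inductive outcome := Halted | Next of config | Fault.

Definition upd (f : nat -> nat) (a v : nat) : nat -> nat :=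
  fun x => if x == a then v else f x.

Definition step (P : seq instr) (B : nat) (c : config) : outcome :=
  let: Cfg p R M := c in
  let set r v := if v <= B then Next (Cfg p.+1 (upd R r v) M) else Fault in
  if p < size P then
    match nth IHalt P p with
    | IConst r v => set r v
    | IAdd r a b => set r (R a + R b)
    | ISub r a b => set r (R a - R b)
    | IMul r a b => set r (R a * R b)
    | IDiv r a b => if R b == 0 then Fault else set r (R a %/ R b)
    | IMod r a b => if R b == 0 then Fault else set r (R a %% R b)
    | ILoad r a => set r (M (R a))
    | IStore a b => Next (Cfg p.+1 R (upd M (R a) (R b)))
    | IJz a l => Next (Cfg (if R a == 0 then l else p.+1) R M)
    | IJlt a b l => Next (Cfg (if R a < R b then l else p.+1) R M)
    | IHalt => Halted
    end
  else Fault.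

Fixpoint run (P : seq instr) (B t : nat) (c : config) : option config :=
  match t with
  | 0 => None
  | t'.+1 => match step P B c with
             | Halted => Some c
             | Next c' => run P B t' c'
             | Fault => None
             end
  end.

(* Input encoding: M[0] = n, M[1] = sigma, M[2 + (i-1)] = w[i]; all else 0. *)
Definition init_cfg (w : seq nat) (sigma : nat) : config :=
  Cfg 0 (fun _ => 0)
      (fun a => if a == 0 then size w else if a == 1 then sigma
                else if a < (size w).+2 then nth 0 w (a - 2) else 0).

(* Output encoding: r_0 = base, M[base] = m (number of edges), and edge k < m
   is the triple (M[base+1+3k], M[base+2+3k], M[base+3+3k]) = (i, j, code). *)
Definition out_triple (c : config) (k : nat) : nat * nat * nat :=
  let b := regs c 0 in
  (mem c (b + 1 + 3 * k), mem c (b + 2 + 3 * k), mem c (b + 3 + 3 * k)).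

Definition outputs_NEG (w : seq nat) (c : config) : Prop :=
  let m := mem c (regs c 0) in
  (forall k, k < m -> exists i j l,
      out_triple c k = (i, j, label_code l) /\ neg_edge w i j l) /\
  (forall i j l, neg_edge w i j l ->
      exists2 k, k < m & out_triple c k = (i, j, label_code l)).

(* The in-edges of v_j are determined by the table last[x] = P_w[j - 1, x].
   The Right edge comes from last[w[j]].  A letter x < w[j] sends an Up edge
   into v_j iff no letter of [x, w[j]] occurs strictly between last[x] and j,
   i.e. iff last[x] exceeds last[y] for every x < y <= w[j]; its source is then
   last[x].  Down edges are symmetric.  Scanning the letters downwards and then
   upwards from w[j] while keeping the running maximum of last[] therefore finds
   all in-edges of v_j in O(sigma) steps, after which last[w[j]] becomes j.
   All values stay below 4 (n + 2)^2, so words of size (n + 2)^4 suffice. *)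

From Pilot Require Import Defs.
From mathcomp Require Import all_boot zify.
Set Implicit Arguments. Unset Strict Implicit. Unset Printing Implicit Defensive.

Lemma bigmax_nat_ltnP (f : nat -> nat) lo hi i : 0 < i ->
  reflect (forall y, lo <= y < hi -> f y < i) (\max_(lo <= y < hi) f y < i).
Proof.
move=> i_gt0; rewrite -[i]prednK // ltnS.
apply: (iffP (bigmax_leqP_seq _ _ _ _)) => le_f y.
- by move=> y_in; apply: le_f => //; rewrite mem_index_iota.
- by rewrite mem_index_iota => y_in _; apply: le_f.
Qed.

Section LastOccurrence.
Variable w : seq nat.

Lemma Pw0 x : Pw w 0 x = 0.
Proof. by rewrite /Pw big_mkcond big_ord_recr big_ord0. Qed.

Lemma PwS i x : Pw w i.+1 x = if wat w i.+1 == x then i.+1 else Pw w i x.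
Proof.
rewrite /Pw big_mkcond big_ord_recr /=.
case: eqP => _ /=; last by rewrite maxn0 -big_mkcond.
apply/maxn_idPr/bigmax_leqP => k _; case: ifP => // _.
exact: ltnW (ltn_ord k).
Qed.

Lemma Pw_leq i x : Pw w i x <= i.
Proof. by elim: i => [|i IH]; rewrite ?Pw0 // PwS; case: eqP => _; lia. Qed.

Lemma leq_Pw i j : 1 <= j <= i -> j <= Pw w i (wat w j).
Proof.
elim: i => [|i IH] j_le; first lia.
rewrite PwS; case: eqP => [_|ne]; first lia.
have j_ne : j != i.+1 by apply/eqP => E; apply: ne; rewrite E.
apply: IH; lia.
Qed.

Lemma wat_Pw i x : 0 < Pw w i x -> wat w (Pw w i x) = x.
Proof. by elim: i => [|i IH]; rewrite ?Pw0 // PwS; case: eqP. Qed.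

Lemma gap_PwP i j lo hi : 1 <= i < j ->
  (forall j', i < j' < j -> ~~ (lo <= wat w j' <= hi)) <->
  (forall y, lo <= y <= hi -> Pw w j.-1 y <= i).
Proof.
move=> ij; split=> [gap y y_in | le_i j' j'_in].
- rewrite leqNgt; apply/negP => lt_i.
  have Pw_gt0 : 0 < Pw w j.-1 y by lia.
  have : i < Pw w j.-1 y < j by have := Pw_leq j.-1 y; lia.
  by move/gap; rewrite wat_Pw // y_in.
- apply/negP => /le_i; have := @leq_Pw j.-1 j'; lia.
Qed.

Lemma gap_sourceP i j x lo hi : lo <= x <= hi ->
  [/\ 0 < i, i < j, wat w i = x &
      forall j', i < j' < j -> ~~ (lo <= wat w j' <= hi)] <->
  [/\ 0 < i, i = Pw w j.-1 x &
      forall y, lo <= y <= hi -> y != x -> Pw w j.-1 y < i].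
Proof.
move=> x_in; split=> [[i_gt0 ij wi gap] | [i_gt0 Ei lt_i]].
- have ij1 : 1 <= i < j by rewrite i_gt0.
  have le_i := (gap_PwP _ _ ij1).1 gap.
  have Ei : i = Pw w j.-1 x by apply/eqP; rewrite eqn_leq le_i // -{1}wi leq_Pw //; lia.
  split=> // y y_in y_ne; rewrite ltn_neqAle le_i // andbT.
  by apply: contra_neq y_ne => E; rewrite -wi -E wat_Pw // E.
- have wi : wat w i = x by rewrite Ei wat_Pw -?Ei.
  have ij : 1 <= i < j by have := Pw_leq j.-1 x; lia.
  split=> //; first lia; apply/(gap_PwP _ _ ij) => y y_in.
  by case: (eqVneq y x) => [->|/(lt_i _ y_in)/ltnW]; rewrite -?Ei.
Qed.

Definition last_max j lo hi := \max_(lo <= y < hi) Pw w j.-1 y.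

Lemma last_max1 j x : last_max j x x.+1 = Pw w j.-1 x.
Proof. by rewrite /last_max big_nat1. Qed.

Lemma last_max_recl j x hi : x < hi ->
  last_max j x hi = maxn (Pw w j.-1 x) (last_max j x.+1 hi).
Proof. by move=> lt_x; rewrite /last_max big_ltn. Qed.

Lemma last_max_recr j lo x : lo <= x ->
  last_max j lo x.+1 = maxn (last_max j lo x) (Pw w j.-1 x).
Proof. by move=> le_x; rewrite /last_max big_nat_recr. Qed.

Lemma neg_edge_RightP i j : 1 <= j <= size w ->
  neg_edge w i j Right <-> i = Pw w j.-1 (wat w j) /\ 0 < i.
Proof.
move=> j_in; split=> [[i_gt0 _ _ [_ Ei]] | [Ei i_gt0]]; first by rewrite -Ei.
have wi : wat w i = wat w j by rewrite Ei wat_Pw -?Ei.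
by have := Pw_leq j.-1 (wat w j); split=> //; lia.
Qed.

Lemma neg_edge_UpP i j x : 1 <= j <= size w -> x < wat w j ->
  neg_edge w i j Up /\ wat w i = x <->
  i = Pw w j.-1 x /\ last_max j x.+1 (wat w j).+1 < i.
Proof.
move=> j_in x_lt; have x_in : x <= x <= wat w j by lia.
split=> [[[i_gt0 ij _ [_ gap]] wi] | [Ei lt_max]].
- have [|_ Ei lt_i] := (gap_sourceP i j x_in).1; first by split=> // j' /gap; lia.
  split=> //; apply/bigmax_nat_ltnP => // y y_in; apply: lt_i; lia.
- have i_gt0 : 0 < i by lia.
  have [|_ ij wi gap] := (gap_sourceP i j x_in).2.
    split=> // y y_in y_ne; apply: (elimT (bigmax_nat_ltnP _ _ _ i_gt0) lt_max); lia.
  by split=> //; split; rewrite ?wi; try lia; split=> // j' /gap; lia.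
Qed.

Lemma neg_edge_DownP i j x : 1 <= j <= size w -> wat w j < x ->
  neg_edge w i j Down /\ wat w i = x <->
  i = Pw w j.-1 x /\ last_max j (wat w j) x < i.
Proof.
move=> j_in x_gt; have x_in : wat w j <= x <= x by lia.
split=> [[[i_gt0 ij _ [_ gap]] wi] | [Ei lt_max]].
- have [|_ Ei lt_i] := (gap_sourceP i j x_in).1; first by split=> // j' /gap; lia.
  split=> //; apply/bigmax_nat_ltnP => // y y_in; apply: lt_i; lia.
- have i_gt0 : 0 < i by lia.
  have [|_ ij wi gap] := (gap_sourceP i j x_in).2.
    split=> // y y_in y_ne; apply: (elimT (bigmax_nat_ltnP _ _ _ i_gt0) lt_max); lia.
  by split=> //; split; rewrite ?wi; try lia; split=> // j' /gap; lia.
Qed.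

End LastOccurrence.

Section Scan.
Variable w : seq nat.

Definition up_done j x (i j' : nat) (l : label) :=
  j' < j \/ j' = j /\ (l = Right \/ l = Up /\ x < wat w i).

Definition down_done j x (i j' : nat) (l : label) :=
  j' < j \/ j' = j /\ (l = Right \/ l = Up \/ l = Down /\ wat w i < x).

Lemma up_done_start j i j' l : 1 <= j <= size w -> neg_edge w i j' l ->
  up_done j (wat w j).-1 i j' l ->
  j' < j \/ [/\ i = Pw w j.-1 (wat w j), 0 < i, j' = j & l = Right].
Proof.
move=> j_in e [|[Ej [El|[El lt_i]]]]; [by left | right | ]; subst j' l.
- by have [Ei i_gt0] := (neg_edge_RightP i j_in).1 e.
- by case: e => _ _ _ []; lia.
Qed.

Lemma up_done_step j x i j' l : 1 <= j <= size w -> x.+1 < wat w j ->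
  neg_edge w i j' l -> up_done j x i j' l ->
  up_done j x.+1 i j' l \/
  [/\ i = Pw w j.-1 x.+1, last_max w j x.+2 (wat w j).+1 < i, j' = j & l = Up].
Proof.
rewrite /up_done => j_in x_lt e [lt_j|[Ej El]]; first by do 2 left.
subst j'; case: El => [El|[El lt_i]]; first by left; right; split; [|left].
subst l; case: (ltnP x.+1 (wat w i)) => [lt_i'|ge_i]; first by left; right; split; [|right].
by right; have [] := (neg_edge_UpP i j_in x_lt).1 (conj e (_ : wat w i = x.+1)); try lia.
Qed.

Lemma down_done_step j x i j' l : 1 <= j <= size w -> wat w j < x ->
  neg_edge w i j' l -> down_done j x.+1 i j' l ->
  down_done j x i j' l \/
  [/\ i = Pw w j.-1 x, last_max w j (wat w j) x < i, j' = j & l = Down].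
Proof.
rewrite /down_done => j_in x_gt e [lt_j|[Ej El]]; first by do 2 left.
subst j'; case: El => [El|[El|[El lt_i]]].
- by left; right; split; [|left].
- by left; right; split; [|right; left].
subst l; case: (ltnP (wat w i) x) => [lt_i'|ge_i].
  by left; right; split; [|right; right].
by right; have [] := (neg_edge_DownP i j_in x_gt).1 (conj e (_ : wat w i = x)); try lia.
Qed.

End Scan.

Lemma updE f a v x : upd f a v x = if x == a then v else f x.
Proof. by []. Qed.

Section Machine.
Variables (P : seq instr) (B : nat).

Definition exec (ins : instr) (c : config) : outcome :=
  let: Cfg p R M := c in
  let set r v := if v <= B then Next (Cfg p.+1 (upd R r v) M) else Fault in
  match ins with
  | IConst r v => set r v
  | IAdd r a b => set r (R a + R b)
  | ISub r a b => set r (R a - R b)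
  | IMul r a b => set r (R a * R b)
  | IDiv r a b => if R b == 0 then Fault else set r (R a %/ R b)
  | IMod r a b => if R b == 0 then Fault else set r (R a %% R b)
  | ILoad r a => set r (M (R a))
  | IStore a b => Next (Cfg p.+1 R (upd M (R a) (R b)))
  | IJz a l => Next (Cfg (if R a == 0 then l else p.+1) R M)
  | IJlt a b l => Next (Cfg (if R a < R b then l else p.+1) R M)
  | IHalt => Halted
  end.

Definition Runs t c (Q : config -> Prop) :=
  forall T, t <= T -> exists cfg, run P B T c = Some cfg /\ Q cfg.

Lemma runs_mono t t' c Q : t <= t' -> Runs t c Q -> Runs t' c Q.
Proof. by move=> le_t run_t T le_T; apply: run_t; apply: leq_trans le_T. Qed.

Lemma runs_step t p R M Q ins : nth IHalt P p = ins -> p < size P ->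
  match exec ins (Cfg p R M) with
  | Halted => Q (Cfg p R M)
  | Next c' => Runs t c' Q
  | Fault => False
  end -> Runs t.+1 (Cfg p R M) Q.
Proof.
move=> fetch p_lt next [|T] // le_T.
have step_ins : step P B (Cfg p R M) = exec ins (Cfg p R M) by rewrite /step p_lt fetch.
have -> : run P B T.+1 (Cfg p R M) = match exec ins (Cfg p R M) with
    Halted => Some (Cfg p R M) | Next c' => run P B T c' | Fault => None end.
  by rewrite -step_ins.
case: (exec ins _) next => [Qc | c' run_c' | //].
- by exists (Cfg p R M).
- exact: run_c'.
Qed.

Definition assertion := (nat -> nat) -> (nat -> nat) -> Prop.

(* Continuation-passing Hoare triple: from pc [p], a state satisfying [Pre]
   reaches pc [p'] and a state satisfying [Post] within [c] fault-free steps. *)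
Definition hoare p (Pre : assertion) p' (Post : assertion) c :=
  forall Q K R M, Pre R M ->
    (forall R' M', Post R' M' -> Runs K (Cfg p' R' M') Q) ->
    Runs (c + K) (Cfg p R M) Q.

Lemma hoare_seq p p' p'' (Pre Mid Post : assertion) c c' :
  hoare p Pre p' Mid c -> hoare p' Mid p'' Post c' -> hoare p Pre p'' Post (c + c').
Proof.
move=> H1 H2 Q K R M pre post; rewrite -addnA.
by apply: (H1 Q _ R M pre) => R' M' mid; apply: (H2 Q K R' M' mid post).
Qed.

Lemma hoare_mono p p' (Pre Post : assertion) c c' :
  c <= c' -> hoare p Pre p' Post c -> hoare p Pre p' Post c'.
Proof.
move=> le_c H Q K R M pre post; apply: runs_mono (H Q K R M pre post).
by rewrite leq_add2r.
Qed.

End Machine.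

Definition emit_code lr : seq instr :=
  [:: IStore 8 11; IAdd 10 8 12; IStore 10 3; IAdd 10 10 12; IStore 10 lr;
      IAdd 8 10 12; IAdd 7 7 12].

(* Registers: r0 = output base n + sigma + 3, r1 = n, r2 = sigma, r3 = j,
   r4 = w[j], r5 = current letter x, r6 = running maximum of last occurrences,
   r7 = number of emitted edges, r8 = address of the next output triple,
   r9 = n + 2, r10 and r11 scratch, and the constants r12 = 1, r13 = 2, r15 = 0,
   which double as the codes of Right, Down and Up.  Cell n + 2 + x holds
   P_w[j - 1, x].  Entry points: 9 next position, 24 scan of the letters below
   w[j], 43 scan of the letters above w[j], 63 halt. *)
Definition neg_prog : seq instr :=
  [:: IConst 12 1; ILoad 1 15; ILoad 2 12; IConst 13 2; IAdd 9 1 13;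
      IAdd 0 9 2; IAdd 0 0 12; IAdd 8 0 12; IConst 3 1;
      IJlt 1 3 63; IAdd 10 3 12; ILoad 4 10; IAdd 10 9 4; ILoad 11 10; IJz 11 22]
  ++ emit_code 12 ++
  [:: IAdd 6 11 15; ISub 5 4 12;
      IJz 5 40; IAdd 10 9 5; ILoad 11 10; IJlt 6 11 30; ISub 5 5 12; IJz 15 24]
  ++ emit_code 15 ++
  [:: IAdd 6 11 15; ISub 5 5 12; IJz 15 24;
      IAdd 10 9 4; ILoad 6 10; IAdd 5 4 12;
      IJlt 2 5 59; IAdd 10 9 5; ILoad 11 10; IJlt 6 11 49; IAdd 5 5 12; IJz 15 43]
  ++ emit_code 13 ++
  [:: IAdd 6 11 15; IAdd 5 5 12; IJz 15 43;
      IAdd 10 9 4; IStore 10 3; IAdd 3 3 12; IJz 15 9;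
      IStore 0 7; IHalt].

Definition emit_regs (R : nat -> nat) :=
  upd (upd (upd (upd R 10 (R 8).+1) 10 (R 8).+2) 8 (R 8).+3) 7 (R 7).+1.
Definition emit_mem (R M : nat -> nat) lr :=
  upd (upd (upd M (R 8) (R 11)) (R 8).+1 (R 3)) (R 8).+2 (R lr).

Lemma emit_regsE R r : emit_regs R r =
  if r == 7 then (R 7).+1 else if r == 8 then (R 8).+3
  else if r == 10 then (R 8).+2 else R r.
Proof. by rewrite /emit_regs !updE; do 3 case: eqP => //. Qed.

Lemma runs_emit B p lr R M K Q : take 7 (drop p neg_prog) = emit_code lr ->
  lr != 10 -> R 12 = 1 -> R 7 < B -> R 8 + 3 <= B ->
  Runs neg_prog B K (Cfg (7 + p) (emit_regs R) (emit_mem R M lr)) Q ->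
  Runs neg_prog B (7 + K) (Cfg p R M) Q.
Proof.
move=> code lr_ne r12 r7 r8 run_K.
have fetch k : k < 7 -> nth IHalt neg_prog (k + p) = nth IHalt (emit_code lr) k.
  by move=> lt_k; rewrite -code nth_take // nth_drop addnC.
have p_lt k : k < 7 -> k + p < size neg_prog.
  move=> lt_k; have := congr1 size code; rewrite size_take size_drop /=.
  by case: ifP => [lt7 _ | _ E]; lia.
have step k t R' M' : k < 7 ->
  match exec B (nth IHalt (emit_code lr) k) (Cfg (k + p) R' M') with
  | Halted => Q (Cfg (k + p) R' M') | Next c' => Runs neg_prog B t c' Q | Fault => False
  end -> Runs neg_prog B t.+1 (Cfg (k + p) R' M') Q.
  by move=> lt_k; apply: runs_step (fetch k lt_k) (p_lt k lt_k).
apply: (step 0) => //=.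
apply: (step 1) => //=; rewrite r12 ifT; last lia.
apply: (step 2) => //=; rewrite !updE /=.
apply: (step 3) => //=; rewrite !updE /= r12 ifT; last lia.
apply: (step 4) => //=; rewrite !updE /= (negbTE lr_ne).
apply: (step 5) => //=; rewrite !updE /= r12 ifT; last lia.
apply: (step 6) => //=; rewrite !updE /= r12 ifT; last lia.
by rewrite !addn1.
Qed.

Section Correctness.
Variables (w : seq nat) (sigma B : nat).
Hypothesis letters_bounded : forall x, x \in w -> 1 <= x <= sigma.
Hypothesis letters_occur : forall x, 1 <= x <= sigma -> x \in w.
Local Notation n := (size w).
Hypothesis B_large : 4 * (n + 2) * (n + 2) <= B.
Local Notation base := (n + sigma + 3).
Local Notation spec := (hoare neg_prog B).

Lemma sigma_leq_n : sigma <= n.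
Proof.
rewrite -[sigma](size_iota 1); apply: uniq_leq_size (iota_uniq _ _) _ => x.
by rewrite mem_iota => x_in; apply: letters_occur; lia.
Qed.

Lemma wat_in_alphabet j : 1 <= j <= n -> 1 <= wat w j <= sigma.
Proof.
move=> j_in; have lt_j : j.-1 < n by lia.
exact/letters_bounded/(mem_nth 0 lt_j).
Qed.

Lemma emit_fits m : m <= n * sigma + n -> base + 4 + 3 * m <= B.
Proof. by have := sigma_leq_n; nia. Qed.

Lemma count_fits j m : 1 <= j <= n -> m <= j.-1 * sigma.+1 + sigma.+1 ->
  base + 4 + 3 * m <= B.
Proof.
move=> j_in le_m; apply: emit_fits; rewrite addnC -mulnS.
by apply: leq_trans le_m _; rewrite addnC -mulSn prednK ?leq_mul2r; lia.
Qed.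

Definition triple_at (M : nat -> nat) k :=
  (M (base + 1 + 3 * k), M (base + 2 + 3 * k), M (base + 3 + 3 * k)).

Definition Emitted M m (D : nat -> nat -> label -> Prop) :=
  (forall k, k < m ->
     exists i j l, triple_at M k = (i, j, label_code l) /\ neg_edge w i j l) /\
  (forall i j l, neg_edge w i j l -> D i j l ->
     exists2 k, k < m & triple_at M k = (i, j, label_code l)).

Lemma Emitted_cover M m D D' : Emitted M m D ->
  (forall i j l, neg_edge w i j l -> D' i j l -> D i j l) -> Emitted M m D'.
Proof. by move=> [sound complete] DD'; split=> // i j l e /(DD' _ _ _ e); apply: complete. Qed.

Lemma Emitted_upd M m D a v : Emitted M m D -> a <= base -> Emitted (upd M a v) m D.
Proof.
move=> [sound complete] a_le.
have same k : triple_at (upd M a v) k = triple_at M k.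
  by rewrite /triple_at !updE; do 3 (case: eqP => [?|_]; first lia).
split=> [k /sound | i j l e /(complete _ _ _ e) [k lt_k Ek]]; first by rewrite same.
by exists k; rewrite ?same.
Qed.

Lemma Emitted_emit M m D i j l : Emitted M m D -> neg_edge w i j l ->
  Emitted (upd (upd (upd M (base + 1 + 3 * m) i) (base + 2 + 3 * m) j)
               (base + 3 + 3 * m) (label_code l)) m.+1
    (fun a b c => D a b c \/ [/\ a = i, b = j & c = l]).
Proof.
move=> [sound complete] e; set M' := upd _ _ _.
have old k : k < m -> triple_at M' k = triple_at M k.
  by move=> lt_k; rewrite /triple_at /M' !updE; do 9 (case: eqP => [?|_]; first lia).
have new : triple_at M' m = (i, j, label_code l).
  by rewrite /triple_at /M' !updE !eqxx /=; do 3 (case: eqP => [?|_]; first lia).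
split=> [k | a b c e' [/(complete _ _ _ e') [k lt_k Ek] | [-> -> ->]]].
- rewrite ltnS leq_eqVlt => /orP[/eqP -> | lt_k]; first by exists i, j, l.
  by rewrite old //; apply: sound.
- by exists k; rewrite ?old //; lia.
- by exists m.
Qed.

Definition InputIntact (M : nat -> nat) :=
  forall a, a < n.+2 -> M a = Defs.mem (init_cfg w sigma) a.

Lemma input_wat M j : InputIntact M -> 1 <= j <= n -> M (j + 1) = wat w j.
Proof.
move=> input j_in; rewrite input /=; last lia.
do 2 (case: eqP => [?|_]; first lia).
by rewrite ifT; [congr nth | ]; lia.
Qed.

Definition LastTable (M : nat -> nat) j :=
  forall x, 1 <= x <= sigma -> M (n + 2 + x) = Pw w j.-1 x.

Lemma LastTable_next M j : LastTable M j -> 1 <= j <= n ->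
  LastTable (upd M (n + 2 + wat w j) j) j.+1.
Proof.
move=> last j_in x x_in; have := wat_in_alphabet j_in.
rewrite updE /= -[in Pw w j _](prednK (_ : 0 < j)) ?PwS ?prednK; try lia.
by case: eqP => [|ne]; case: eqP => [|ne'] //; try lia; rewrite last.
Qed.

Definition ConstRegs (R : nat -> nat) :=
  [/\ R 0 = base, R 1 = n, R 2 = sigma, R 9 = n + 2 &
      [/\ R 12 = 1, R 13 = 2 & R 15 = 0]].

Record State j m D (R M : nat -> nat) : Prop := {
  state_consts : ConstRegs R;
  state_pos : R 3 = j;
  state_count : R 7 = m;
  state_ptr : R 8 = base + 1 + 3 * m;
  state_input : InputIntact M;
  state_last : LastTable M j;
  state_out : Emitted M m D }.

Lemma State_upd_reg j m D R M r v : State j m D R M ->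
  r \notin [:: 0; 1; 2; 3; 7; 8; 9; 12; 13; 15] -> State j m D (upd R r v) M.
Proof.
case=> [[r0 r1 r2 r9 [r12 r13 r15]] r3 r7 r8 input last out]; rewrite !inE => r_ne.
by split=> //; try split; try split; rewrite updE; case: eqP => // Er; move: r_ne; rewrite -Er.
Qed.

Lemma State_cover j m D D' R M : State j m D R M ->
  (forall i j' l, neg_edge w i j' l -> D' i j' l -> D i j' l) -> State j m D' R M.
Proof. by case=> *; split=> //; apply: Emitted_cover; eauto. Qed.

Lemma State_emit j m D R M lr l : State j m D R M -> R lr = label_code l ->
  neg_edge w (R 11) j l ->
  State j m.+1 (fun a b c => D a b c \/ [/\ a = R 11, b = j & c = l])
    (emit_regs R) (emit_mem R M lr).
Proof.
case=> [[r0 r1 r2 r9 [r12 r13 r15]] r3 r7 r8 input last out] rl e.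
rewrite /emit_regs /emit_mem.
split; rewrite ?updE /=; try lia.
- by split; rewrite !updE.
- by move=> a a_lt; rewrite !updE; do 3 (case: eqP => [?|_]; first lia); apply: input.
- by move=> x x_in; rewrite !updE; do 3 (case: eqP => [?|_]; first lia); apply: last.
- rewrite r8 r3 rl.
  have -> : (base + 1 + 3 * m).+1 = base + 2 + 3 * m by lia.
  have -> : (base + 2 + 3 * m).+1 = base + 3 + 3 * m by lia.
  exact: Emitted_emit.
Qed.

Definition head_inv j : assertion := fun R M =>
  exists2 m, State j m (fun _ b _ => b < j) R M & m <= j.-1 * sigma.+1.

Definition up_inv j x : assertion := fun R M =>
  exists2 m, State j m (up_done w j x) R M &
  [/\ R 4 = wat w j, R 5 = x, R 6 = last_max w j x.+1 (wat w j).+1,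
      x < wat w j & m + x <= j.-1 * sigma.+1 + wat w j].

Definition down_inv j x : assertion := fun R M =>
  exists2 m, State j m (down_done w j x) R M &
  [/\ R 4 = wat w j, R 5 = x, R 6 = last_max w j (wat w j) x,
      wat w j < x <= sigma.+1 & m < j.-1 * sigma.+1 + x].

Ltac rw_regs := repeat match goal with
  | H : ?R ?k = _ |- context [?R ?k] => is_var R; rewrite H
  end.
Ltac read_regs := rewrite /= ?updE /= ?emit_regsE /= ?updE /=; rw_regs; rewrite /=.
Ltac run_instr := apply: runs_step;
  [cbv [nth neg_prog cat emit_code]; reflexivity | by [] | cbn [exec]; read_regs].
Ltac fits := rewrite ifT; last lia.
Ltac no_jump := rewrite ifF; last (apply/negbTE; lia).
Ltac frame_regs := repeat (apply: State_upd_reg; last by []).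

Lemma runs_init Q K :
  (forall R M, head_inv 1 R M -> Runs neg_prog B K (Cfg 9 R M) Q) ->
  Runs neg_prog B (9 + K) (init_cfg w sigma) Q.
Proof.
move=> post; have := emit_fits (leq0n (n * sigma + n)); rewrite muln0 addn0 => fit.
rewrite /init_cfg; do 9 (run_instr; fits).
apply: post; exists 0 => //; split; rewrite ?updE //=; try lia.
- by rewrite /ConstRegs !updE /=; split; try split; lia.
- move=> x x_in /=; rewrite Pw0; do 2 (case: eqP => [?|_]; first lia).
  by rewrite ifF //; lia.
- by split=> [k // | i j l [i_gt0 ij _ _] /=]; lia.
Qed.

Lemma hoare_right_edge j : 1 <= j <= n -> spec 9 (head_inv j) 24 (up_inv j (wat w j).-1) 15.
Proof.
move=> j_in Q K R M [m St le_m] post.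
have [[r0 r1 r2 r9 [r12 r13 r15]] r3 r7 r8 input last out] := St.
have a_in := wat_in_alphabet j_in.
have fit : base + 4 + 3 * m <= B by apply: (count_fits j_in); lia.
have Pw_le := Pw_leq w j.-1 (wat w j).
run_instr; no_jump.
run_instr; fits.
run_instr; rewrite input_wat //; fits.
run_instr; fits.
run_instr; rewrite last //; fits.
run_instr; case: eqP => [Pw_0 | Pw_gt0].
- run_instr; fits. run_instr; fits.
  apply: (runs_mono _ (post _ _ _)); first lia.
  exists m; last first.
    read_regs; rewrite addn0 subn1 prednK ?last_max1; [split; lia | lia].
  frame_regs; apply: (State_cover St) => i j' l e /(up_done_start j_in e).
  by case=> [// | [Ei i_gt0 _ _]]; lia.
- apply: (runs_emit (lr := 12) (K := 2 + K)) => //; rewrite ?updE //=; try lia.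
  run_instr; fits. run_instr; fits.
  apply: post; exists m.+1; last first.
    read_regs; rewrite addn0 subn1 prednK ?last_max1; [split; lia | lia].
  frame_regs; apply: State_cover; first apply: (State_emit (lr := 12) (l := Right)).
  + by frame_regs; exact: St.
  + by rewrite !updE.
  + by rewrite !updE /=; apply/neg_edge_RightP => //; lia.
  + move=> i j' l e /(up_done_start j_in e) [lt_j | [-> i_gt0 -> ->]]; [by left | by right].
Qed.

Lemma hoare_up_step j x : 1 <= j <= n -> spec 24 (up_inv j x.+1) 24 (up_inv j x) 14.
Proof.
move=> j_in Q K R M [m St [r4 r5 r6 x_lt le_m]] post.
have [[r0 r1 r2 r9 [r12 r13 r15]] r3 r7 r8 input last out] := St.
have a_in := wat_in_alphabet j_in.
have fit : base + 4 + 3 * m <= B by apply: (count_fits j_in); lia.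
have Pw_le := Pw_leq w j.-1 x.+1.
run_instr.
run_instr; fits.
run_instr; rewrite last; [fits | lia].
run_instr; case: ltnP => [lt_max | le_max].
- apply: (runs_emit (lr := 15) (K := 3 + K)) => //; rewrite ?updE //=; try lia.
  run_instr; fits. run_instr; fits. run_instr.
  apply: post; exists m.+1; last first.
    by read_regs; rewrite (@last_max_recl w j x.+1 (wat w j).+1); [split; lia | lia].
  frame_regs; apply: State_cover; first apply: (State_emit (lr := 15) (l := Up)).
  + by frame_regs; exact: St.
  + by rewrite !updE.
  + by rewrite !updE /=; have [] := (neg_edge_UpP _ j_in x_lt).2 (conj erefl lt_max).
  + move=> i j' l e /(up_done_step j_in x_lt e) [D | [-> _ -> ->]]; [by left | by right].
- run_instr; fits. run_instr.
  apply: (runs_mono _ (post _ _ _)); first lia.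
  exists m; last first.
    by read_regs; rewrite (@last_max_recl w j x.+1 (wat w j).+1); [split; lia | lia].
  frame_regs; apply: (State_cover St) => i j' l e /(up_done_step j_in x_lt e).
  by case=> [// | [Ei lt_i _ _]]; lia.
Qed.

Lemma hoare_up_scan j x : 1 <= j <= n -> spec 24 (up_inv j x) 40 (up_inv j 0) (14 * x + 1).
Proof.
move=> j_in; elim: x => [|x IH].
- move=> Q K R M inv post; have [m _ [_ r5 _ _ _]] := inv.
  by run_instr; apply: post.
- by apply: (hoare_mono _ (hoare_seq (hoare_up_step (x := x) j_in) IH)); lia.
Qed.

Lemma hoare_up_to_down j : 1 <= j <= n ->
  spec 40 (up_inv j 0) 43 (down_inv j (wat w j).+1) 3.
Proof.
move=> j_in Q K R M [m St [r4 r5 r6 a_gt0 le_m]] post.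
have [[r0 r1 r2 r9 [r12 r13 r15]] r3 r7 r8 input last out] := St.
have a_in := wat_in_alphabet j_in.
have fit : base + 4 + 3 * m <= B by apply: (count_fits j_in); lia.
have Pw_le := Pw_leq w j.-1 (wat w j).
run_instr; fits.
run_instr; rewrite last //; fits.
run_instr; fits.
apply: post; exists m; last by read_regs; rewrite addn1 last_max1; split; lia.
frame_regs; apply: (State_cover St) => i j' l e; rewrite /up_done.
case=> [lt_j | [Ej El]]; first by left.
subst j'; right; split=> //.
case: El => [El | [El | [El lt_i]]]; [by left | right | ]; subst l.
- by split=> //; case: e => i_gt0 ij j_le _; have := @wat_in_alphabet i; lia.
- by case: e => _ _ _ []; lia.
Qed.

Lemma hoare_down_step j x : 1 <= j <= n -> x <= sigma ->
  spec 43 (down_inv j x) 43 (down_inv j x.+1) 14.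
Proof.
move=> j_in x_le Q K R M [m St [r4 r5 r6 x_in le_m]] post.
have [[r0 r1 r2 r9 [r12 r13 r15]] r3 r7 r8 input last out] := St.
have a_in := wat_in_alphabet j_in.
have fit : base + 4 + 3 * m <= B by apply: (count_fits j_in); lia.
have Pw_le := Pw_leq w j.-1 x.
have a_lt : wat w j < x by lia.
run_instr; no_jump.
run_instr; fits.
run_instr; rewrite last; [fits | lia].
run_instr; case: ltnP => [lt_max | le_max].
- apply: (runs_emit (lr := 13) (K := 3 + K)) => //; rewrite ?updE //=; try lia.
  run_instr; fits. run_instr; fits. run_instr.
  apply: post; exists m.+1; last first.
    by read_regs; rewrite (@last_max_recr w j (wat w j) x); [split; lia | lia].
  frame_regs; apply: State_cover; first apply: (State_emit (lr := 13) (l := Down)).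
  + by frame_regs; exact: St.
  + by rewrite !updE.
  + by rewrite !updE /=; have [] := (neg_edge_DownP _ j_in a_lt).2 (conj erefl lt_max).
  + move=> i j' l e /(down_done_step j_in a_lt e) [D | [-> _ -> ->]]; [by left | by right].
- run_instr; fits. run_instr.
  apply: (runs_mono _ (post _ _ _)); first lia.
  exists m; last first.
    by read_regs; rewrite (@last_max_recr w j (wat w j) x); [split; lia | lia].
  frame_regs; apply: (State_cover St) => i j' l e /(down_done_step j_in a_lt e).
  by case=> [// | [Ei lt_i _ _]]; lia.
Qed.

Lemma hoare_down_scan j d x : 1 <= j <= n -> x + d = sigma.+1 ->
  spec 43 (down_inv j x) 59 (down_inv j sigma.+1) (14 * d + 1).
Proof.
move=> j_in; elim: d x => [|d IH] x xd.
- move=> Q K R M inv post; have [m St [_ r5 _ _ _]] := inv.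
  have [[r0 r1 r2 r9 [r12 r13 r15]] _ _ _ _ _ _] := St.
  by run_instr; rewrite ifT; last lia; apply: post; rewrite -xd addn0.
- by apply: (hoare_mono _ (hoare_seq (hoare_down_step j_in _) (IH x.+1 _))); lia.
Qed.

Lemma State_next j m R M : 1 <= j <= n -> State j m (down_done w j sigma.+1) R M ->
  State j.+1 m (fun _ b _ => b < j.+1) (upd R 3 j.+1) (upd M (n + 2 + wat w j) j).
Proof.
move=> j_in [[r0 r1 r2 r9 [r12 r13 r15]] r3 r7 r8 input last out].
have a_in := wat_in_alphabet j_in.
split; rewrite ?updE //=.
- by move=> a a_lt; rewrite updE; case: eqP => [?|_]; [lia | apply: input].
- exact: LastTable_next.
- have a_le : n + 2 + wat w j <= base by lia.
  apply: (Emitted_cover (Emitted_upd _ out a_le)) => i j' l e lt_j.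
  rewrite /down_done; case: (ltnP j' j) => [|le_j]; [by left | right; split; first lia].
  case: l e => [_ | _ | e]; [by right; left | by left | right; right; split=> //].
  by case: e => i_gt0 ij j_le _; have := @wat_in_alphabet i; lia.
Qed.

Lemma hoare_next_position j : 1 <= j <= n -> spec 59 (down_inv j sigma.+1) 9 (head_inv j.+1) 4.
Proof.
move=> j_in Q K R M [m St [r4 r5 r6 _ le_m]] post.
have [[r0 r1 r2 r9 [r12 r13 r15]] r3 r7 r8 input last out] := St.
have a_in := wat_in_alphabet j_in.
have fit : base + 4 + 3 * m <= B by apply: (count_fits j_in); lia.
run_instr; fits. run_instr. run_instr; fits. run_instr.
apply: post; exists m; first by rewrite addn1; apply: State_next => //; frame_regs.
by rewrite /= -[in j * _](prednK (_ : 0 < j)) ?mulSn; lia.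
Qed.

Lemma hoare_position j : 1 <= j <= n -> spec 9 (head_inv j) 9 (head_inv j.+1) (24 + 14 * sigma).
Proof.
move=> j_in; have a_in := wat_in_alphabet j_in.
have xd : (wat w j).+1 + (sigma - wat w j) = sigma.+1 by lia.
apply: (hoare_mono _ (hoare_seq (hoare_right_edge j_in)
  (hoare_seq (hoare_up_scan (x := (wat w j).-1) j_in)
  (hoare_seq (hoare_up_to_down j_in)
  (hoare_seq (hoare_down_scan j_in xd) (hoare_next_position j_in)))))); lia.
Qed.

Lemma hoare_positions d j : j + d = n.+1 -> 1 <= j ->
  spec 9 (head_inv j) 9 (head_inv n.+1) (d * (24 + 14 * sigma)).
Proof.
elim: d j => [|d IH] j jd j_gt0.
- by rewrite addn0 in jd; rewrite -jd => Q K R M inv post; apply: post.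
- by rewrite mulSn; apply: hoare_seq (hoare_position _) (IH j.+1 _ _); lia.
Qed.

Lemma runs_halt R M : head_inv n.+1 R M -> Runs neg_prog B 3 (Cfg 9 R M) (outputs_NEG w).
Proof.
move=> [m [[r0 r1 r2 r9 [r12 r13 r15]] r3 r7 r8 _ _ out] _].
run_instr; rewrite ifT; last lia.
run_instr. run_instr.
have [sound complete] := Emitted_upd m out (leqnn base).
rewrite /outputs_NEG /out_triple /= r0 updE eqxx; split=> [k /sound // | i j l e].
by have [_ _ j_le _] := e; apply: (complete _ _ _ e); lia.
Qed.

Lemma neg_prog_correct :
  Runs neg_prog B (12 + n * (24 + 14 * sigma)) (init_cfg w sigma) (outputs_NEG w).
Proof.
apply: (runs_mono _ (runs_init (K := n * (24 + 14 * sigma) + 3) _)); first lia.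
move=> R M inv; apply: (hoare_positions (d := n) _ _ inv) => //.
by move=> R' M'; apply: runs_halt.
Qed.

End Correctness.

Lemma word_size_bound k : 4 * (k + 2) * (k + 2) <= k.+2 ^ 4.
Proof.
rewrite addn2 !expnS expn0 muln1.
have : 4 <= k.+2 * k.+2 by nia.
nia.
Qed.

Lemma running_time n sigma : (0 < n -> 0 < sigma) ->
  12 + n * (24 + 14 * sigma) <= 100 * (n * sigma) + 100.
Proof. by case: n => [|n] /= => [_ | /(_ isT)]; nia. Qed.

Theorem lemma17 :
  exists (P : seq instr) (k c : nat),
  forall (sigma : nat) (w : seq nat),
    (forall x, x \in w -> 1 <= x <= sigma) ->
    (forall x, 1 <= x <= sigma -> x \in w) ->
    exists cfg,
      run P ((size w).+2 ^ k) (c * (size w * sigma) + c) (init_cfg w sigma)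
        = Some cfg /\ outputs_NEG w cfg.
Proof.
exists neg_prog, 4, 100 => sigma w letters_bounded letters_occur.
have correct := neg_prog_correct letters_bounded letters_occur (word_size_bound (size w)).
apply: correct; apply: running_time; case: w letters_bounded {letters_occur} => // x s.
by move=> /(_ x (mem_head x s)) x_in _; lia.
Qed.
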